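(* Let $F$ be a nonempty $\Omega$-decorated rooted forest. Let $A$ be the set of triples $(\sigma,\tau,\rho)$ where, for some $s\ge r\ge1$, $\sigma:\mathcal V(F)\to\{1,\ldots,s\}$ is a surjection with $u<v\Rightarrow\sigma(u)<\sigma(v)$, $\tau:\{1,\ldots,s\}\to\{1,\ldots,r\}$ is a nondecreasing surjection, and $\rho\in\mathrm{qsh}(\tau)$. Let $B$ be the set of triples $(G,\alpha,\beta)$ where $G$ is a covering subforest of $F$, and for some $r,t\ge1$, $\alpha:\mathcal V(F/G)\to\{1,\ldots,r\}$ is a surjection strictly increasing for the order of $F/G$ (i.e. $x<y\Rightarrow\alpha(x)<\alpha(y)$) and $\beta:\mathcal V(G)\to\{1,\ldots,t\}$ is a surjection strictly increasing for the order of $G$. Then there is a bijection $\Phi:A\to B$ such that, whenever $\Phi(\sigma,\tau,\rho)=(G,\alpha,\beta)$, one has $F^{\tau\circ\sigma}=(F/G)^\alpha$ and $F^{\rho\circ\sigma}=G^\beta$.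
   Context: $\Omega$ is a set with a commutative semigroup law written additively, $[a+b]$ the sum. A rooted forest is a finite directed acyclic graph in which each vertex has at most one incoming edge; its vertex set $\mathcal V(F)$ is partially ordered by $u\le v$ iff there is a directed path from a root to $v$ through $u$. An $\Omega$-decorated forest carries a map $d:\mathcal V(F)\to\Omega$. A covering subforest $G$ of $F$ is a partition of $\mathcal V(F)$ into blocks each inducing a connected subgraph, identified with the decorated forest on $\mathcal V(G)=\mathcal V(F)$ obtained by keeping only edges of $F$ inside blocks; $F/G$ is obtained from $F$ by contracting each block to one vertex decorated by the $\Omega$-sum of the decorations of the block. For a decorated forest $H$ and a surjection $\sigma:\mathcal V(H)\to\{1,\ldots,s\}$, $H^\sigma$ is the word $H^\sigma_1\cdots H^\sigma_s$ with $H^\sigma_j=[\sum_{\sigma(v)=j}d(v)]\in\Omega$. For a nondecreasing surjection $\tau:\{1,\ldots,s\}\to\{1,\ldots,r\}$, $\mathrm{qsh}(\tau)$ is the set of surjections $\rho:\{1,\ldots,s\}\to\{1,\ldots,t\}$ (for some $t\le s$) that are strictly increasing on each block $\tau^{-1}(j)$, $j=1,\ldots,r$. *)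

From mathcomp Require Import all_boot.
Set Implicit Arguments. Unset Strict Implicit. Unset Printing Implicit Defensive.

(* ---------- Omega-valued sums (semigroup, no unit: None plays the unit) ---- *)
Definition oop (Om : Type) (op : Om -> Om -> Om) (a b : option Om) : option Om :=
  match a, b with
  | None, _ => b
  | _, None => a
  | Some x, Some y => Some (op x y)
  end.
Definition osum (Om : Type) (op : Om -> Om -> Om) (l : seq (option Om)) :=
  foldr (oop op) None l.

Definition strict_below (T : finType) (e : rel T) (x y : T) : bool :=
  [exists z, e x z && connect e z y].

Definition fedge (V : finType) (par : V -> option V) : rel V :=
  fun x y => par y == Some x.

Definition is_forest (V : finType) (par : V -> option V) : Prop :=
  forall v, ~~ strict_below (fedge par) v v.

Definition block_rel (V : finType) (par : V -> option V) (b : {set V}) : rel V :=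
  fun x y => [&& x \in b, y \in b & (par y == Some x) || (par x == Some y)].

Definition covering_subforest (V : finType) (par : V -> option V)
    (P : {set {set V}}) : Prop :=
  partition P [set: V] /\
  forall b, b \in P -> forall x y, x \in b -> y \in b -> connect (block_rel par b) x y.

(* G as a forest on V(G) = V(F): keep only edges of F inside blocks *)
Definition Gedge (V : finType) (par : V -> option V) (P : {set {set V}}) : rel V :=
  fun x y => (par y == Some x) && (pblock P x == pblock P y).

(* F/G: vertices are the blocks of P; an edge b -> c for each edge of F
   going from block b to a different block c *)
Definition Qedge (V : finType) (par : V -> option V) (P : {set {set V}}) :
    rel {set V} :=
  fun b c => [&& b \in P, c \in P, b != c &
              [exists x in c, exists y in b, par x == Some y]].

Definition block_dec (Om : Type) (op : Om -> Om -> Om) (V : finType)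
    (d : V -> Om) (b : {set V}) : option Om :=
  osum op [seq Some (d v) | v <- enum b].

Definition surj_onto (T : Type) (D : T -> Prop) (f : T -> nat) (n : nat) : Prop :=
  (forall x, D x -> 1 <= f x <= n) /\
  (forall j, 1 <= j <= n -> exists x, D x /\ f x = j).

(* H^f : the word H^f_1 ... H^f_s, s = max f, H^f_j = sum_{f v = j} d v *)
Definition word (Om : Type) (op : Om -> Om -> Om) (T : finType) (D : pred T)
    (d : T -> option Om) (f : T -> nat) : seq (option Om) :=
  [seq osum op [seq d x | x <- enum T & D x && (f x == j)]
  | j <- iota 1 (\max_(x | D x) f x)].

(* A function on {1,...,s} is encoded by the list of its values
   [:: g 1; ...; g s]; [lfun g j] is the value at j. *)
Definition lfun (g : seq nat) (j : nat) : nat := nth 0 g j.-1.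
Definition in1s (s : nat) (j : nat) : Prop := 1 <= j <= s.

Definition inA (V : finType) (par : V -> option V)
    (x : {ffun V -> nat} * seq nat * seq nat) : Prop :=
  let: (sigma, tau, rho) := x in
  exists s r, [/\ 1 <= r <= s,
    surj_onto (fun _ => True) sigma s,
    (forall u v, strict_below (fedge par) u v -> sigma u < sigma v),
    [/\ size tau = s, surj_onto (in1s s) (lfun tau) r &
        forall i j, 1 <= i -> i <= j -> j <= s -> lfun tau i <= lfun tau j] &
    [/\ size rho = s,
        (exists t, t <= s /\ surj_onto (in1s s) (lfun rho) t) &
        forall i j, 1 <= i -> i < j -> j <= s -> lfun tau i = lfun tau j ->
          lfun rho i < lfun rho j]].

Definition inB (V : finType) (par : V -> option V)
    (y : {set {set V}} * {ffun {set V} -> nat} * {ffun V -> nat}) : Prop :=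
  let: (P, alpha, beta) := y in
  [/\ covering_subforest par P,
    (* alpha is a function on V(F/G) = P; normalised to 0 outside P *)
    (forall b, b \notin P -> alpha b = 0),
    (exists r, 1 <= r /\ surj_onto (fun b => b \in P) alpha r) /\
    (forall b c, strict_below (Qedge par P) b c -> alpha b < alpha c),
    (exists t, 1 <= t /\ surj_onto (fun _ => True) beta t) &
    (forall u v, strict_below (Gedge par P) u v -> beta u < beta v)].

From HB Require Import structures.
From mathcomp Require Import all_boot zify.
Set Implicit Arguments. Unset Strict Implicit. Unset Printing Implicit Defensive.

(* Phi maps (sigma, tau, rho) to (G, alpha, beta) where G cuts F into the
   connected components of the edges on which tau o sigma is constant, alpha is
   the common value of tau o sigma on a block, and beta = rho o sigma.  Monotonicity
   of tau makes alpha strictly increasing on F/G, and the quasi-shuffle condition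
   makes beta strictly increasing on G.  Conversely, sigma is the rank of a vertex
   v for the lexicographic order on the pairs (alpha (block of v), beta v), and
   tau, rho are the two coordinates read along this ranking; the quasi-shuffle
   condition says precisely that i < j iff (tau i, rho i) < (tau j, rho j)
   lexicographically, which makes the two constructions inverse.  The words
   agree because the vertices of colour j are grouped into the blocks of colour j. *)


Section Rank.
Variables (T : finType) (f : T -> nat).

Definition values := sort leq (undup [seq f x | x <- enum T]).
Definition rank x := (index (f x) values).+1.

Lemma sorted_values : sorted ltn values.
Proof.
by rewrite ltn_sorted_uniq_leq sort_uniq undup_uniq (sort_sorted leq_total).
Qed.

Lemma mem_values x : f x \in values.
Proof. by rewrite mem_sort mem_undup map_f // mem_enum. Qed.

Lemma rank_bounds x : 1 <= rank x <= size values.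
Proof. by rewrite /rank ltnS index_mem mem_values. Qed.

Lemma nth_values_rank x : nth 0 values (rank x).-1 = f x.
Proof. by rewrite nth_index // mem_values. Qed.

Lemma rank_surj j : 1 <= j <= size values -> exists x, rank x = j.
Proof.
case: j => // j /= lt_j.
have : nth 0 values j \in values by rewrite mem_nth.
rewrite mem_sort mem_undup => /mapP [x _ fx].
by exists x; rewrite /rank -fx index_uniq // sort_uniq undup_uniq.
Qed.

Lemma ltn_nth_values i j : i < j < size values -> nth 0 values i < nth 0 values j.
Proof.
case/andP => lt_ij lt_j.
by apply: (sorted_ltn_nth ltn_trans 0 sorted_values); rewrite ?inE // (ltn_trans lt_ij).
Qed.

Lemma ltn_rank x y : (rank x < rank y) = (f x < f y).
Proof.
have := rank_bounds x; have := rank_bounds y.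
rewrite -(nth_values_rank x) -(nth_values_rank y).
case: (ltngtP (rank x) (rank y)) => [lt_xy|lt_yx|->] hy hx; last by rewrite ltnn.
- by rewrite ltn_nth_values //; lia.
- by rewrite ltnNge ltnW // ltn_nth_values //; lia.
Qed.

End Rank.

Lemma surj_onto_order_eq (T : Type) (f g : T -> nat) s s' :
  surj_onto (fun _ => True) f s -> surj_onto (fun _ => True) g s' ->
  (forall u v, (f u < f v) = (g u < g v)) -> f =1 g.
Proof.
move=> [f_bnd f_surj] [g_bnd g_surj] same_order.
suff eq_le n v : f v <= n -> g v = f v by move=> v; rewrite (eq_le (f v)).
elim: n v => [|n IHn] v le_fv; first by have := f_bnd v I; lia.
have := f_bnd v I; have := g_bnd v I => /andP [g1 gs] /andP [f1 fs].
apply/eqP; rewrite eqn_leq; apply/andP; split.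
- rewrite leqNgt; apply/negP => lt_fg.
  have [w [_ gw]] := g_surj (f v) ltac:(lia).
  have lt_wv : f w < f v by rewrite same_order gw.
  by have := IHn w ltac:(lia); lia.
- have [le_f1|lt_1f] := leqP (f v) 1; first lia.
  have [w [_ fw]] := f_surj (f v).-1 ltac:(lia).
  have : f w < f v by rewrite fw; lia.
  by rewrite same_order => lt_wv; have := IHn w ltac:(lia); lia.
Qed.

Lemma surj_onto_leq s r (g : nat -> nat) : surj_onto (in1s s) g r -> r <= s.
Proof.
case=> _ g_surj.
have -> : s = size (map g (iota 1 s)) by rewrite size_map size_iota.
rewrite -[r](size_iota 1).
apply: uniq_leq_size (iota_uniq 1 r) _ => j; rewrite mem_iota => j_bnd.
have [i [i_bnd <-]] := g_surj j ltac:(lia).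
by apply: map_f; rewrite mem_iota; move: i_bnd; rewrite /in1s; lia.
Qed.

Definition lexltn (p q : nat * nat) := (p.1 < q.1) || (p.1 == q.1) && (p.2 < q.2).

Section LexRank.
Variables (T : finType) (a b : T -> nat).

(* The pair [(a x, b x)] is encoded as the number [a x * lex_base + b x], which
   preserves the lexicographic order; [lex_fst] and [lex_snd] decode a rank. *)
Definition lex_base := (\max_x b x).+1.
Definition lex_key x := a x * lex_base + b x.
Definition lex_rank : {ffun T -> nat} := [ffun x => rank lex_key x].
Definition lex_fst := [seq k %/ lex_base | k <- values lex_key].
Definition lex_snd := [seq k %% lex_base | k <- values lex_key].

Lemma ltn_lex_base x : b x < lex_base.
Proof. by rewrite ltnS (leq_bigmax (F := b)). Qed.

Lemma ltn_lex_key x y : (lex_key x < lex_key y) = lexltn (a x, b x) (a y, b y).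
Proof.
have step p q : p < q -> p * lex_base + lex_base <= q * lex_base.
  by move=> lt_pq; rewrite addnC -mulSn leq_mul2r lt_pq orbT.
have := step (a x) (a y); have := step (a y) (a x).
have := ltn_lex_base x; have := ltn_lex_base y; rewrite /lex_key /lexltn /=.
by case: (ltngtP (a x) (a y)) => [lt_xy|lt_yx|->] /= ? ? ? ?; lia.
Qed.

Lemma ltn_lex_rank x y : (lex_rank x < lex_rank y) = lexltn (a x, b x) (a y, b y).
Proof. by rewrite !ffunE ltn_rank ltn_lex_key. Qed.

Lemma lex_rank_bounds x : 1 <= lex_rank x <= size (values lex_key).
Proof. by rewrite ffunE rank_bounds. Qed.

Lemma lex_rank_surj i : 1 <= i <= size (values lex_key) -> exists x, lex_rank x = i.
Proof. by move=> /rank_surj [x rx]; exists x; rewrite ffunE. Qed.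

Lemma lex_fst_rank x : lfun lex_fst (lex_rank x) = a x.
Proof.
have := rank_bounds lex_key x; rewrite /lfun ffunE => bnd.
rewrite (nth_map 0) ?nth_values_rank; last lia.
by rewrite /lex_key divnMDl // divn_small ?addn0 ?ltn_lex_base.
Qed.

Lemma lex_snd_rank x : lfun lex_snd (lex_rank x) = b x.
Proof.
have := rank_bounds lex_key x; rewrite /lfun ffunE => bnd.
rewrite (nth_map 0) ?nth_values_rank; last lia.
by rewrite /lex_key modnMDl modn_small ?ltn_lex_base.
Qed.

Lemma lex_fst_homo i j : 1 <= i -> i <= j -> j <= size (values lex_key) ->
  lfun lex_fst i <= lfun lex_fst j.
Proof.
move=> i1 le_ij j_bnd; rewrite /lfun !(nth_map 0); try lia.
rewrite leq_div2r; case: (ltngtP i j) le_ij => // [lt_ij _|-> _] //.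
by rewrite ltnW // ltn_nth_values //; lia.
Qed.

Lemma lex_snd_homo i j : 1 <= i -> i < j -> j <= size (values lex_key) ->
  lfun lex_fst i = lfun lex_fst j -> lfun lex_snd i < lfun lex_snd j.
Proof.
move=> i1 lt_ij j_bnd; rewrite /lfun !(nth_map 0); try lia.
have : nth 0 (values lex_key) i.-1 < nth 0 (values lex_key) j.-1.
  by rewrite ltn_nth_values //; lia.
move: (nth 0 _ i.-1) (nth 0 _ j.-1) => k l lt_kl eq_div.
by rewrite (divn_eq k lex_base) (divn_eq l lex_base) eq_div ltn_add2l in lt_kl.
Qed.

End LexRank.

Section Connect.
Variables (T : finType) (e : rel T).

Lemma strict_below_edge x y : e x y -> strict_below e x y.
Proof. by move=> exy; apply/existsP; exists y; rewrite exy connect0. Qed.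

Lemma connect_homo (g : T -> nat) :
  (forall x y, e x y -> g x < g y) -> forall x y, connect e x y -> g x <= g y.
Proof.
move=> g_lt x y /connectP [p p_path ->] {y}.
elim: p x p_path => //= z p IHp x /andP [exz z_path].
exact: leq_trans (ltnW (g_lt _ _ exz)) (IHp _ z_path).
Qed.

Lemma strict_below_homo (g : T -> nat) :
  (forall x y, e x y -> g x < g y) -> forall x y, strict_below e x y -> g x < g y.
Proof.
move=> g_lt x y /existsP [z /andP [exz czy]].
exact: leq_trans (g_lt _ _ exz) (connect_homo g_lt czy).
Qed.

Lemma connect_invariant (U : Type) (k : T -> U) :
  (forall x y, e x y -> k x = k y) -> forall x y, connect e x y -> k x = k y.
Proof.
move=> k_eq x y /connectP [p p_path ->] {y}.
elim: p x p_path => //= z p IHp x /andP [exz z_path].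
by rewrite (k_eq _ _ exz) (IHp _ z_path).
Qed.

Lemma connect_sub_in (e' : rel T) (A : pred T) x y :
  (forall u w, u \in A -> e u w -> (w \in A) && e' u w) ->
  x \in A -> connect e x y -> connect e' x y.
Proof.
move=> sub_e xA /connectP [p p_path ->] {y}.
elim: p x xA p_path => //= z p IHp x xA /andP [exz z_path].
case/andP: (sub_e _ _ xA exz) => zA e'xz.
exact: connect_trans (connect1 e'xz) (IHp _ zA z_path).
Qed.

End Connect.

Lemma partition_pblock (T : finType) (P : {set {set T}}) b :
  partition P [set: T] -> b \in P -> exists x, b = pblock P x.
Proof.
case/and3P=> _ tiP P_n0 bP.
have /set0Pn [x xb] : b != set0 by apply: contraNneq P_n0 => <-.
by exists x; rewrite (def_pblock tiP bP xb).
Qed.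

Section Monochromatic.
Variables (V : finType) (par : V -> option V) (c : V -> nat).

Definition mono_edge : rel V :=
  fun x y => ((par y == Some x) || (par x == Some y)) && (c x == c y).

Definition mono_partition := equivalence_partition (connect mono_edge) [set: V].

Definition block_color : {ffun {set V} -> nat} :=
  [ffun b => if b \in mono_partition then odflt 0 (omap c [pick x in b]) else 0].

Lemma mono_edge_sym : symmetric mono_edge.
Proof. by move=> x y; rewrite /mono_edge orbC [c y == _]eq_sym. Qed.

Lemma connect_mono_edge_equiv : {in [set: V] & &, equivalence_rel (connect mono_edge)}.
Proof.
move=> x y z _ _ _; split=> [|cxy]; first exact: connect0.
apply/idP/idP=> [cxz|]; last exact: connect_trans.
by apply: connect_trans cxz; rewrite (sym_connect_sym mono_edge_sym).
Qed.

Lemma mono_partitionP : partition mono_partition [set: V].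
Proof. exact: equivalence_partitionP connect_mono_edge_equiv. Qed.

Lemma mem_mono_pblock x y : (y \in pblock mono_partition x) = connect mono_edge x y.
Proof. by rewrite (pblock_equivalence_partition connect_mono_edge_equiv) ?inE. Qed.

Lemma mono_cover x : x \in cover mono_partition.
Proof. by rewrite (cover_partition mono_partitionP) inE. Qed.

Lemma connect_mono_edge_color x y : connect mono_edge x y -> c x = c y.
Proof. by apply: connect_invariant => u w /andP [_ /eqP]. Qed.

Lemma block_color_pblock x : block_color (pblock mono_partition x) = c x.
Proof.
rewrite ffunE pblock_mem ?mono_cover //.
case: pickP => [y|]; last by move/(_ x); rewrite mem_pblock mono_cover.
by rewrite mem_mono_pblock => /connect_mono_edge_color ->.
Qed.

Lemma mono_partition_covering : covering_subforest par mono_partition.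
Proof.
split=> [|b bP x y xb yb]; first exact: mono_partitionP.
have tiP : trivIset mono_partition by case/and3P: mono_partitionP.
rewrite -(def_pblock tiP bP xb) in yb *; rewrite mem_mono_pblock in yb.
apply: (connect_sub_in (A := mem (pblock mono_partition x))) yb;
  last by rewrite inE mem_pblock mono_cover.
move=> u w; rewrite !inE !mem_mono_pblock => cxu /[dup] uw /andP [par_uw _].
have cxw : connect mono_edge x w := connect_trans cxu (connect1 uw).
by rewrite cxw /block_rel !mem_mono_pblock cxu cxw.
Qed.

Lemma Gedge_mono_color u v : Gedge par mono_partition u v -> c u = c v.
Proof.
case/andP=> _ /eqP eq_uv.
have : v \in pblock mono_partition u by rewrite eq_uv mem_pblock mono_cover.
by rewrite mem_mono_pblock => /connect_mono_edge_color.
Qed.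

Hypothesis c_homo : forall x y, par y == Some x -> c x <= c y.

Lemma Qedge_block_color b b' :
  Qedge par mono_partition b b' -> block_color b < block_color b'.
Proof.
case/and4P=> bP b'P neq_bb' /existsP [y /andP [yb' /existsP [x /andP [xb par_xy]]]].
have tiP : trivIset mono_partition by case/and3P: mono_partitionP.
rewrite -(def_pblock tiP bP xb) -(def_pblock tiP b'P yb') in neq_bb' *.
rewrite !block_color_pblock ltn_neqAle c_homo // andbT.
apply: contra neq_bb' => eq_c; apply/eqP/same_pblock => //.
by rewrite mem_mono_pblock connect1 // mono_edge_sym /mono_edge par_xy eq_c.
Qed.

End Monochromatic.

Lemma mono_partition_eq (V : finType) (par : V -> option V) (c : V -> nat)
    (P : {set {set V}}) :
  covering_subforest par P ->
  (forall x y, par y == Some x -> (c x == c y) = (pblock P x == pblock P y)) ->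
  mono_partition par c = P.
Proof.
move=> [P_part P_conn] mono_in_block.
have tiP : trivIset P by case/and3P: P_part.
have P_cover x : x \in cover P by rewrite (cover_partition P_part) inE.
have connect_pblock x y : connect (mono_edge par c) x y = (y \in pblock P x).
  apply/idP/idP=> [cxy|yPx].
  - rewrite (connect_invariant _ cxy) ?mem_pblock //.
    move=> u w /andP [/orP [] par_uw /eqP eq_c].
    + by apply/eqP; rewrite -mono_in_block // eq_c.
    + by apply/esym/eqP; rewrite -mono_in_block // eq_c.
  - have bP : pblock P x \in P by rewrite pblock_mem.
    apply: connect_sub (P_conn _ bP x y _ yPx) => [u w /and3P [ub wb par_uw]|];
      last by rewrite mem_pblock.
    apply/connect1; rewrite /mono_edge par_uw /=.
    case/orP: par_uw => /mono_in_block;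
      by rewrite (def_pblock tiP bP ub) (def_pblock tiP bP wb) eqxx ?[c w == _]eq_sym => ->.
rewrite -[RHS](equivalence_partition_pblock P_part) /mono_partition.
by apply: eq_imset => x; apply/setP => y; rewrite !inE connect_pblock.
Qed.

Section Word.
Variables (Om : Type) (op : Om -> Om -> Om).
Hypotheses (op_assoc : associative op) (op_comm : commutative op).

Lemma oopA : associative (oop op).
Proof. by case=> [x|] [y|] [z|] //=; rewrite op_assoc. Qed.

Lemma oopC : commutative (oop op).
Proof. by case=> [x|] [y|] //=; rewrite op_comm. Qed.

Lemma oop0 : left_id None (oop op).
Proof. by case. Qed.

HB.instance Definition _ :=
  Monoid.isComLaw.Build (option Om) None (oop op) oopA oopC oop0.

Lemma osum_big (I : Type) (l : seq I) (F : I -> option Om) :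
  osum op [seq F x | x <- l] = \big[oop op/None]_(x <- l) F x.
Proof. by elim: l => [|x l IHl]; rewrite ?big_nil ?big_cons //= -IHl. Qed.

Lemma eq_word (T : finType) (D : pred T) (d : T -> option Om) (f g : T -> nat) :
  f =1 g -> word op D d f = word op D d g.
Proof.
move=> eq_fg; rewrite /word (eq_bigr _ (fun x _ => eq_fg x)).
by apply: eq_map => j; congr osum; congr map; apply: eq_filter => x; rewrite eq_fg.
Qed.

Lemma word_mono_partition (V : finType) (par : V -> option V) (d : V -> Om)
    (c : V -> nat) :
  word op predT (fun v => Some (d v)) c
  = word op (mem (mono_partition par c)) (block_dec op d) (block_color par c).
Proof.
set P := mono_partition par c; set col := block_color par c.
have tiP : trivIset P by case/and3P: (mono_partitionP par c).
have P_pblock b : b \in P -> exists v, b = pblock P v.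
  exact: partition_pblock (mono_partitionP par c).
rewrite /word; have -> : \max_(v | predT v) c v = \max_(b | b \in P) col b.
  apply/eqP; rewrite eqn_leq; apply/andP; split; apply/bigmax_leqP.
  - move=> v _; rewrite -(block_color_pblock par c v).
    by apply: leq_bigmax_cond; rewrite pblock_mem ?mono_cover.
  - move=> b /P_pblock [v ->]; rewrite block_color_pblock.
    exact: leq_bigmax_cond.
apply: eq_map => j; rewrite !osum_big !big_filter big_enum_cond.
set Pj := [set b in P | col b == j].
have tiPj : trivIset Pj.
  by apply: trivIsetS tiP; apply/subsetP => b; rewrite inE => /andP [].
have cover_Pj v : (v \in cover Pj) = (c v == j).
  apply/bigcupP/idP => [[b] | cvj].
  - rewrite inE => /andP [bP colb] vb.
    by rewrite -(def_pblock tiP bP vb) block_color_pblock in colb.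
  - exists (pblock P v); last by rewrite mem_pblock mono_cover.
    by rewrite inE pblock_mem ?mono_cover // block_color_pblock.
rewrite (eq_bigl (mem (cover Pj))) => [|v]; last by rewrite /= cover_Pj.
rewrite big_trivIset // big_enum_cond; apply: eq_big => [b|b _]; first by rewrite inE.
by rewrite /block_dec osum_big big_enum.
Qed.

End Word.

Lemma surj_onto_uniq (T : Type) (D : T -> Prop) (f : T -> nat) s s' :
  surj_onto D f s -> surj_onto D f s' -> s = s'.
Proof.
move=> [f_bnd f_surj] [f_bnd' f_surj'].
apply/eqP; rewrite eqn_leq; apply/andP; split; rewrite leqNgt; apply/negP => lt.
- by have [x [Dx fx]] := f_surj s ltac:(lia); have := f_bnd' x Dx; lia.
- by have [x [Dx fx]] := f_surj' s' ltac:(lia); have := f_bnd x Dx; lia.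
Qed.

Lemma lfun_surj_inj (T : Type) (sigma : T -> nat) s (l l' : seq nat) :
  surj_onto (fun _ => True) sigma s -> size l = s -> size l' = s ->
  (forall x, lfun l (sigma x) = lfun l' (sigma x)) -> l = l'.
Proof.
move=> [_ sigma_surj] size_l size_l' eq_ll'.
apply: (@eq_from_nth _ 0) => [|i]; first by rewrite size_l size_l'.
rewrite size_l => lt_is; have [x [_ sx]] := sigma_surj i.+1 ltac:(lia).
by have := eq_ll' x; rewrite sx.
Qed.

Lemma qsh_lexltn s (tau rho : seq nat) :
  (forall i j, 1 <= i -> i <= j -> j <= s -> lfun tau i <= lfun tau j) ->
  (forall i j, 1 <= i -> i < j -> j <= s -> lfun tau i = lfun tau j ->
     lfun rho i < lfun rho j) ->
  forall i j, in1s s i -> in1s s j ->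
  (i < j) = lexltn (lfun tau i, lfun rho i) (lfun tau j, lfun rho j).
Proof.
rewrite /in1s /lexltn /= => tau_homo rho_homo.
have lt_lex i j : 1 <= i -> i < j -> j <= s ->
    (lfun tau i < lfun tau j) || (lfun tau i == lfun tau j) && (lfun rho i < lfun rho j).
  move=> i1 lt_ij js; have := tau_homo i j i1 (ltnW lt_ij) js.
  rewrite leq_eqVlt => /orP [/eqP eq_tau|->] //.
  by rewrite eq_tau ltnn eqxx rho_homo.
move=> i j /andP [i1 i_s] /andP [j1 js].
case: (ltngtP i j) => [lt_ij|lt_ji|->]; first by rewrite lt_lex.
- by have := lt_lex j i j1 lt_ji i_s; lia.
- by rewrite ltnn eqxx; lia.
Qed.

Section Bijection.
Variables (V : finType) (par : V -> option V).

Definition Phi (a : {ffun V -> nat} * seq nat * seq nat) :=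
  let: (sigma, tau, rho) := a in
  let c v := lfun tau (sigma v) in
  (mono_partition par c, block_color par c, [ffun v => lfun rho (sigma v)]).

Lemma Phi_inB a : inA par a -> inB par (Phi a).
Proof.
case: a => [[sigma tau] rho] /=.
case=> s [r [r_bnd [sigma_bnd sigma_surj] sigma_homo
  [size_tau [tau_bnd tau_surj] tau_homo] [size_rho [t [le_ts [rho_bnd rho_surj]]] rho_qsh]]].
set c := fun v => lfun tau (sigma v).
have sigma_edge x y : par y == Some x -> sigma x < sigma y.
  by move=> par_xy; apply: sigma_homo; apply: strict_below_edge.
have sigma_in1s x : 1 <= sigma x <= s by apply: sigma_bnd.
have c_homo x y : par y == Some x -> c x <= c y.
  move=> /sigma_edge lt_xy; have := sigma_in1s x; have := sigma_in1s y.
  by move=> /andP [? ?] /andP [? ?]; apply: tau_homo; lia.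
split.
- exact: mono_partition_covering.
- by move=> b bP; rewrite ffunE (negbTE bP).
- split; last exact: strict_below_homo (Qedge_block_color c_homo).
  exists r; split; first by case/andP: r_bnd.
  split=> [b bP|j /tau_surj [i [i_s <-]]].
    have [v ->] := partition_pblock (mono_partitionP par c) bP.
    by rewrite block_color_pblock; apply/tau_bnd/sigma_in1s.
  have [v [_ sv]] := sigma_surj i i_s.
  exists (pblock (mono_partition par c) v); rewrite pblock_mem ?mono_cover //.
  by rewrite block_color_pblock /c sv.
- exists t; split.
    by have := rho_bnd 1; rewrite /in1s; case/andP: r_bnd; lia.
  split=> [v _|j /rho_surj [i [i_s <-]]]; first by rewrite ffunE; apply/rho_bnd/sigma_in1s.
  by have [v [_ sv]] := sigma_surj i i_s; exists v; rewrite ffunE sv.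
- apply: strict_below_homo => u v /[dup] Guv /andP [par_uv _]; rewrite !ffunE.
  have := sigma_edge u v par_uv; have := sigma_in1s u; have := sigma_in1s v.
  move=> /andP [? ?] /andP [? ?] lt_uv; apply: rho_qsh => //.
  exact: Gedge_mono_color Guv.
Qed.

Lemma inA_ltn_lexltn sigma tau rho : inA par (sigma, tau, rho) ->
  forall u v, (sigma u < sigma v) = lexltn (lfun tau (sigma u), lfun rho (sigma u))
                                           (lfun tau (sigma v), lfun rho (sigma v)).
Proof.
case=> s [r [_ [sigma_bnd _] _ [_ _ tau_homo] [_ _ rho_qsh]]] u v.
exact: qsh_lexltn tau_homo rho_qsh _ _ (sigma_bnd u I) (sigma_bnd v I).
Qed.

Lemma Phi_inj a a' : inA par a -> inA par a' -> Phi a = Phi a' -> a = a'.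
Proof.
case: a a' => [[sigma tau] rho] [[sigma' tau'] rho'] hA hA' /= [eq_P eq_col eq_beta].
have eq_c v : lfun tau (sigma v) = lfun tau' (sigma' v).
  have := block_color_pblock par (fun v => lfun tau (sigma v)) v.
  by rewrite eq_P eq_col block_color_pblock /= => ->.
have eq_rho v : lfun rho (sigma v) = lfun rho' (sigma' v).
  by have := congr1 (fun f : {ffun V -> nat} => f v) eq_beta; rewrite !ffunE.
case: (hA) => s [r [_ sigma_surj _ [size_tau _ _] [size_rho _ _]]].
case: (hA') => s' [r' [_ sigma_surj' _ [size_tau' _ _] [size_rho' _ _]]].
have eq_sigma : sigma = sigma'.
  apply/ffunP; apply: surj_onto_order_eq sigma_surj sigma_surj' _ => u v.
  by rewrite (inA_ltn_lexltn hA) (inA_ltn_lexltn hA') !eq_c !eq_rho.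
subst sigma'; rewrite -(surj_onto_uniq sigma_surj sigma_surj') in size_tau' size_rho'.
by rewrite (lfun_surj_inj sigma_surj size_tau size_tau' eq_c)
           (lfun_surj_inj sigma_surj size_rho size_rho' eq_rho).
Qed.

Lemma lex_rank_inA (a b : V -> nat) r t :
  1 <= r -> surj_onto (fun _ => True) a r -> surj_onto (fun _ => True) b t ->
  (forall x y, par y == Some x -> lexltn (a x, b x) (a y, b y)) ->
  inA par (lex_rank a b, lex_fst a b, lex_snd a b).
Proof.
move=> r1 [a_bnd a_surj] [b_bnd b_surj] lex_edge.
set s := size (values (lex_key a b)).
have fst_surj : surj_onto (in1s s) (lfun (lex_fst a b)) r.
  split=> [i /lex_rank_surj [x <-]|j /a_surj [x [_ <-]]]; first by rewrite lex_fst_rank; apply: a_bnd.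
  by exists (lex_rank a b x); rewrite /in1s lex_fst_rank lex_rank_bounds.
have snd_surj : surj_onto (in1s s) (lfun (lex_snd a b)) t.
  split=> [i /lex_rank_surj [x <-]|j /b_surj [x [_ <-]]]; first by rewrite lex_snd_rank; apply: b_bnd.
  by exists (lex_rank a b x); rewrite /in1s lex_snd_rank lex_rank_bounds.
exists s, r; split.
- by rewrite r1 (surj_onto_leq fst_surj).
- by split=> [x _|i /lex_rank_surj [x <-]]; [exact: lex_rank_bounds | exists x].
- by apply: strict_below_homo => x y /lex_edge; rewrite ltn_lex_rank.
- by rewrite size_map; split=> //; apply: lex_fst_homo.
- rewrite size_map; split=> //; last exact: lex_snd_homo.
  by exists t; rewrite (surj_onto_leq snd_surj).
Qed.

Lemma Phi_surj b : inB par b -> exists2 a, inA par a & Phi a = b.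
Proof.
case: b => [[P alpha] beta] [P_cov alpha_out [[r [r1 alpha_surj]] alpha_homo]
  [t [_ beta_surj]] beta_homo].
have [P_part _] := P_cov; have tiP : trivIset P by case/and3P: P_part.
have P_cover x : x \in cover P by rewrite (cover_partition P_part) inE.
set a := fun v => alpha (pblock P v).
have a_edge x y : par y == Some x -> pblock P x != pblock P y -> a x < a y.
  move=> par_xy neq_xy; apply/alpha_homo/strict_below_edge.
  rewrite /Qedge !pblock_mem // neq_xy /=; apply/existsP; exists y.
  by rewrite mem_pblock P_cover /=; apply/existsP; exists x; rewrite mem_pblock P_cover.
have beta_edge x y : par y == Some x -> pblock P x == pblock P y -> beta x < beta y.
  by move=> par_xy eq_xy; apply/beta_homo/strict_below_edge; rewrite /Gedge par_xy.
have a_surj : surj_onto (fun _ => True) a r.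
  case: alpha_surj => alpha_bnd alpha_surj.
  split=> [v _|j /alpha_surj [B [BP <-]]]; first by apply/alpha_bnd/pblock_mem.
  by have [v ->] := partition_pblock P_part BP; exists v.
exists (lex_rank a beta, lex_fst a beta, lex_snd a beta).
  apply: lex_rank_inA r1 a_surj beta_surj _ => x y par_xy; rewrite /lexltn /=.
  have [eq_xy|neq_xy] := eqVneq (pblock P x) (pblock P y).
    by rewrite /a eq_xy ltnn eqxx beta_edge ?eq_xy.
  by rewrite a_edge.
have eq_P : mono_partition par (fun v => lfun (lex_fst a beta) (lex_rank a beta v)) = P.
  apply: mono_partition_eq P_cov _ => x y par_xy; rewrite !lex_fst_rank.
  have [eq_xy|neq_xy] := eqVneq (pblock P x) (pblock P y); first by rewrite /a eq_xy eqxx.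
  by rewrite ltn_eqF ?a_edge.
rewrite /Phi eq_P; congr (_, _, _); apply/ffunP => x; last by rewrite ffunE lex_snd_rank.
have [xP|xnP] := boolP (x \in P); last by rewrite alpha_out // ffunE eq_P (negbTE xnP).
have [v ->] := partition_pblock P_part xP.
by rewrite -{1}eq_P block_color_pblock lex_fst_rank.
Qed.

End Bijection.

Theorem lemma5p2 (Om : Type) (op : Om -> Om -> Om)
    (op_assoc : associative op) (op_comm : commutative op)
    (V : finType) (par : V -> option V) (d : V -> Om)
    (hforest : is_forest par) (hne : 0 < #|V|) :
  exists Phi : {ffun V -> nat} * seq nat * seq nat ->
               {set {set V}} * {ffun {set V} -> nat} * {ffun V -> nat},
  [/\ (forall a, inA par a -> inB par (Phi a)),
      (forall a a', inA par a -> inA par a' -> Phi a = Phi a' -> a = a'),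
      (forall b, inB par b -> exists2 a, inA par a & Phi a = b) &
      (forall sigma tau rho P alpha beta,
         inA par (sigma, tau, rho) -> Phi (sigma, tau, rho) = (P, alpha, beta) ->
         word op predT (fun v => Some (d v)) (fun v => lfun tau (sigma v))
           = word op (mem P) (block_dec op d) alpha /\
         word op predT (fun v => Some (d v)) (fun v => lfun rho (sigma v))
           = word op predT (fun v => Some (d v)) beta)].
Proof.
exists (Phi par); split; [exact: Phi_inB | exact: Phi_inj | exact: Phi_surj |].
move=> sigma tau rho P alpha beta _ [<- <- <-]; split.
- exact: word_mono_partition.
- by apply: eq_word => v; rewrite ffunE.
Qed.
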